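(* Regardless of whether the agent is myopic or patient, for any $\varepsilon>0$ there is a dynamic environment in which the principal's utility $u_P^M(\emptyset)$ under an optimal memoryless IC mechanism is at most an $\varepsilon$ fraction of the principal's optimal utility (the supremum of $u_P^M(\emptyset)$ over all IC dynamic mechanisms).
   Context: A dynamic environment consists of a time horizon $T\in\mathbb N$, a finite state space $\mathcal S$, a finite action space $\mathcal A$, valuation functions $v^P_t,v^A_t:\mathcal S\times\mathcal A\to\mathbb R$ ($t\in[T]$) of the principal and the agent, an initial distribution $P_0\in\Delta(\mathcal S)$, and transition operators $P_t:\mathcal S\times\mathcal A\to\Delta(\mathcal S)$ with $P_t(s,a,s')$ the probability of next state $s'$ after action $a$ in state $s$ at time $t$. For $t\ge1$, $\mathcal H_t$ is the set of sequences $(s_1,a_1,\dots,s_t,a_t)$; $\mathcal H_0=\{\emptyset\}$; $\mathcal H=\bigcup_{t=0}^{T-1}\mathcal H_t$; $h+(s,a)$ appends $(s,a)$. A mechanism $M=(\pi,p)$ has $\pi:\mathcal H\times\mathcal S\to\Delta(\mathcal A)$ and payments $p:\mathcal H\times\mathcal S\to\mathbb R$ (agent to principal). $M$ is memoryless if $\pi(h,s)$ and $p(h,s)$ depend only on $|h|$ and $s$. Principal's onward utility: $u_P^M(h,s)=\sum_a\pi(h,s,a)\big(v^P_{|h|+1}(s,a)+\sum_{s'}P_{|h|+1}(s,a,s')u_P^M(h+(s,a),s')\big)+p(h,s)$ (zero when $|h|=T$), $u_P^M(\emptyset)=\sum_sP_0(s)u_P^M(\emptyset,s)$. A reporting strategy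 $r:\mathcal H\times\mathcal S\to\mathcal S$ induces for $h=(s_1,a_1,\dots,s_t,a_t)$ the reported history $r(h)=(s'_1,a_1,\dots,s'_t,a_t)$ with $s'_i=r((s_1,a_1,\dots,s_{i-1},a_{i-1}),s_i)$. Patient agent: $u_A^M(h,s)=\sum_a\pi(h,s,a)\big(v^A_{|h|+1}(s,a)+\sum_{s'}P_{|h|+1}(s,a,s')u_A^M(h+(s,a),s')\big)-p(h,s)$ and $u_A^{M,r}(h,s)=\sum_a\pi(r(h),r(h,s),a)\big(v^A_{|h|+1}(s,a)+\sum_{s'}P_{|h|+1}(s,a,s')u_A^{M,r}(h+(s,a),s')\big)-p(r(h),r(h,s))$ (both zero when $|h|=T$); $M$ is IC if $\sum_sP_0(s)u_A^M(\emptyset,s)\ge\sum_sP_0(s)u_A^{M,r}(\emptyset,s)$ for all $r$. Myopic agent: $u_A^M(h,s)=\sum_a\pi(h,s,a)v^A_{|h|+1}(s,a)-p(h,s)$, $u_A^{M,r}(h,s)=\sum_a\pi(r(h),r(h,s),a)v^A_{|h|+1}(s,a)-p(r(h),r(h,s))$; $M$ is IC if for all $h\in\mathcal H,s\in\mathcal S$ and every $r$ with $r(h',s')=s'$ whenever $|h'|<|h|$, $u_A^M(h,s)\ge u_A^{M,r}(h,s)$. *)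

From HB Require Import structures.
From mathcomp Require Import all_boot all_order all_algebra.
From mathcomp Require Import reals.
Unset Printing Implicit Defensive.
Import Order.TTheory GRing.Theory Num.Theory.
Local Open Scope ring_scope.

Definition is_distr {R : realType} {X : finType} (f : X -> R) : Prop :=
  (forall x, 0 <= f x) /\ \sum_(x : X) f x = 1.

(* Dynamic environment.  Time indices t are naturals; only t in [1, T] are
   ever used.  Ptr t s a s' is the probability of s' after a in s at time t. *)
Record env (R : realType) := Env {
  T : nat;
  St : finType;
  Ac : finType;
  vP : nat -> St -> Ac -> R;
  vA : nat -> St -> Ac -> R;
  P0 : St -> R;
  Ptr : nat -> St -> Ac -> St -> R }.
Arguments T {R} e.
Arguments St {R} e.
Arguments Ac {R} e.
Arguments vP {R} e _ _ _.
Arguments vA {R} e _ _ _.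
Arguments P0 {R} e _.
Arguments Ptr {R} e _ _ _ _.

Definition valid_env {R : realType} (E : env R) : Prop :=
  is_distr (P0 E) /\ forall t s a, (1 <= t <= T E)%N -> is_distr (Ptr E t s a).

(* Histories (s_1,a_1,...,s_t,a_t) are sequences of pairs, oldest first;
   h + (s,a) is [rcons h (s,a)]; |h| is [size h]. H = histories of size < T. *)
Definition hist {R : realType} (E : env R) := seq (St E * Ac E).

Record mech {R : realType} (E : env R) := Mech {
  pi : hist E -> St E -> Ac E -> R;
  pay : hist E -> St E -> R }.
Arguments pi {R E} m _ _ _.
Arguments pay {R E} m _ _.

Definition valid_mech {R : realType} {E : env R} (M : mech E) : Prop :=
  forall (h : hist E) s, (size h < T E)%N -> is_distr (pi M h s).

Definition memoryless {R : realType} {E : env R} (M : mech E) : Prop :=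
  forall (h h' : hist E) s, (size h < T E)%N -> size h = size h' ->
    pi M h s = pi M h' s /\ pay M h s = pay M h' s.

(* Onward utilities computed by recursion on the number k = T - |h| of
   remaining steps. *)
Fixpoint uP_rec {R : realType} {E : env R} (M : mech E) (k : nat)
    (h : hist E) (s : St E) : R :=
  match k with
  | O => 0
  | k'.+1 =>
    \sum_(a : Ac E) pi M h s a *
       (vP E (size h).+1 s a +
        \sum_(s' : St E) Ptr E (size h).+1 s a s' * uP_rec M k' (rcons h (s, a)) s')
    + pay M h s
  end.

Definition uP {R : realType} {E : env R} (M : mech E) (h : hist E) s : R :=
  uP_rec M (T E - size h) h s.

Definition uP0 {R : realType} {E : env R} (M : mech E) : R :=
  \sum_(s : St E) P0 E s * uP M [::] s.

Definition strategy {R : realType} (E : env R) := hist E -> St E -> St E.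

(* reported history r(h): s'_i = r((s_1,a_1,...,s_{i-1},a_{i-1}), s_i) *)
Fixpoint rep_aux {R : realType} {E : env R} (r : strategy E) (pre h : hist E)
  : hist E :=
  match h with
  | [::] => [::]
  | (s, a) :: h' => (r pre s, a) :: rep_aux r (rcons pre (s, a)) h'
  end.

Definition rep {R : realType} {E : env R} (r : strategy E) (h : hist E) : hist E :=
  rep_aux r [::] h.

Fixpoint uA_rec {R : realType} {E : env R} (M : mech E) (k : nat)
    (h : hist E) (s : St E) : R :=
  match k with
  | O => 0
  | k'.+1 =>
    \sum_(a : Ac E) pi M h s a *
       (vA E (size h).+1 s a +
        \sum_(s' : St E) Ptr E (size h).+1 s a s' * uA_rec M k' (rcons h (s, a)) s')
    - pay M h s
  end.

Fixpoint uAr_rec {R : realType} {E : env R} (M : mech E) (r : strategy E)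
    (k : nat) (h : hist E) (s : St E) : R :=
  match k with
  | O => 0
  | k'.+1 =>
    \sum_(a : Ac E) pi M (rep r h) (r h s) a *
       (vA E (size h).+1 s a +
        \sum_(s' : St E) Ptr E (size h).+1 s a s' * uAr_rec M r k' (rcons h (s, a)) s')
    - pay M (rep r h) (r h s)
  end.

Definition uA_pat {R : realType} {E : env R} (M : mech E) h s : R :=
  uA_rec M (T E - size h) h s.
Definition uAr_pat {R : realType} {E : env R} (M : mech E) r h s : R :=
  uAr_rec M r (T E - size h) h s.

Definition IC_patient {R : realType} {E : env R} (M : mech E) : Prop :=
  forall r : strategy E,
    \sum_(s : St E) P0 E s * uAr_pat M r [::] s <=
    \sum_(s : St E) P0 E s * uA_pat M [::] s.

Definition uA_myo {R : realType} {E : env R} (M : mech E) (h : hist E) s : R :=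
  \sum_(a : Ac E) pi M h s a * vA E (size h).+1 s a - pay M h s.

Definition uAr_myo {R : realType} {E : env R} (M : mech E) (r : strategy E)
    (h : hist E) s : R :=
  \sum_(a : Ac E) pi M (rep r h) (r h s) a * vA E (size h).+1 s a
  - pay M (rep r h) (r h s).

Definition IC_myopic {R : realType} {E : env R} (M : mech E) : Prop :=
  forall (h : hist E) (s : St E) (r : strategy E), (size h < T E)%N ->
    (forall (h' : hist E) s', (size h' < size h)%N -> r h' s' = s') ->
    uAr_myo M r h s <= uA_myo M h s.

(* Individual rationality: without it every
   constant payment is IC and the principal's optimum is +infinity. *)
Definition IR_patient {R : realType} {E : env R} (M : mech E) : Prop :=
  0 <= \sum_(s : St E) P0 E s * uA_pat M [::] s.

Definition IR_myopic {R : realType} {E : env R} (M : mech E) : Prop :=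
  forall (h : hist E) s, (size h < T E)%N -> 0 <= uA_myo M h s.

Definition feasible {R : realType} {E : env R} (myopic : bool) (M : mech E)
  : Prop :=
  valid_mech M /\
  (if myopic then IC_myopic M /\ IR_myopic M else IC_patient M /\ IR_patient M).

(* Two periods, two persistent types [true] and [false], action [true] meaning
   "serve the agent".  In period 2 type [true] values service at 1, type
   [false] at 2, and serving type [false] costs the principal 4; in period 1
   service is worthless to type [true] and costs type [false] 1.  Period 1
   thus lets the agent signal its type: the mechanism that serves in period 1
   exactly the reports [true] and in period 2 repeats the period-1 action at
   price 1 is IC and earns 1/2.  A memoryless mechanism cannot use that
   signal, so its period-2 part is a one-shot IC mechanism, whose allocation
   is monotone: type [false] is served at least as often as type [true].
   Since payments cancel between principal and agent, IR bounds the
   principal's utility by the expected total surplus, which monotonicity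
   makes nonpositive.  So every memoryless IC mechanism earns at most 0. *)

From Pilot Require Import Defs.
From HB Require Import structures.
From mathcomp Require Import all_boot all_order all_algebra.
From mathcomp Require Import reals.
From mathcomp Require Import lra.
Import Order.TTheory GRing.Theory Num.Theory.
Local Open Scope ring_scope.

Section PeriodwiseIR.
Variables (R : realType) (E : env R) (M : mech E).
Hypotheses (E_valid : valid_env E) (M_valid : valid_mech M).

Lemma uA_rec_ge0 : IR_myopic M ->
  forall k (h : hist E) s, (size h + k <= T E)%N -> 0 <= uA_rec M k h s.
Proof.
case: E_valid => _ Ptr_distr IR; elim=> [//|k IHk] h s hk /=.
have h_lt : (size h < T E)%N by rewrite (leq_trans _ hk) // addnS ltnS leq_addr.
under eq_bigr do rewrite mulrDr.
rewrite big_split /= addrAC; apply: addr_ge0; first exact: IR.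
apply: sumr_ge0 => a _; apply: mulr_ge0; first by case: (M_valid h s h_lt).
apply: sumr_ge0 => s' _; apply: mulr_ge0.
  by case: (Ptr_distr (size h).+1 s a); rewrite ?h_lt.
by apply: IHk; rewrite size_rcons addSn -addnS.
Qed.

Lemma IR_myopic_patient : IR_myopic M -> IR_patient M.
Proof.
move=> IR; apply: sumr_ge0 => s _; apply: mulr_ge0.
  by case: E_valid => -[P0_ge0 _] _.
by rewrite /uA_pat subn0; apply: uA_rec_ge0.
Qed.

End PeriodwiseIR.

Section Example.
Variable R : realType.

Definition signaling_env : env R := {|
  T := 2%N; St := bool; Ac := bool;
  vP := fun t s a => if (t == 2)%N && a && ~~ s then -4 else 0;
  vA := fun t s a => if (t == 1)%N then (if ~~ s && a then -1 else 0)
                     else if a then (if s then 1 else 2) else 0;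
  P0 := fun _ => 2^-1;
  Ptr := fun _ s _ s' => if s' == s then 1 else 0 |}.

Lemma signaling_env_valid : valid_env signaling_env.
Proof.
split.
  by split => [x|]; rewrite ?big_bool /=; lra.
move=> t s a _; split => [x|] /=; first by case: ifP => _; lra.
by rewrite big_bool /=; case: s => /=; lra.
Qed.

Definition repeat_mech : mech signaling_env := @Mech R signaling_env
  (fun h s a => if h is (_, a1) :: _ then (a == a1)%:R else (a == s)%:R)
  (fun h s => if h is (_, a1) :: _ then a1%:R else 0).

Lemma uP0_repeat_mech : uP0 repeat_mech = 2^-1.
Proof. by rewrite /uP0 /uP /= !big_bool /=; lra. Qed.

Lemma repeat_mech_feasible myopic : feasible myopic repeat_mech.
Proof.
split.
  move=> [|[s1 a1] h] s _; split => [a|] /=; rewrite ?big_bool //=.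
  - by case: s; rewrite /= ?addr0 ?add0r.
  - by case: a1; rewrite /= ?addr0 ?add0r.
case: myopic; split.
- move=> [|[s1 a1] [|? ?]] s r //= _ _.
  rewrite /uAr_myo /uA_myo /= !big_bool /=.
  by case: (r [::] s); case: s => /=; lra.
- move=> [|[s1 a1] [|? ?]] s //= _; rewrite /uA_myo /= !big_bool /=.
    by case: s => /=; lra.
  by case: a1; case: s => /=; lra.
- move=> r; rewrite /uAr_pat /uA_pat /rep /= !big_bool /=.
  by case: (r [::] true); case: (r [::] false) => /=; lra.
- by rewrite /IR_patient /uA_pat /= !big_bool /=; lra.
Qed.

Section Memoryless.
Variable M : mech signaling_env.
Hypotheses (M_valid : valid_mech M) (M_memoryless : memoryless M).

Let h1 : hist signaling_env := [:: (false, false)].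

Lemma memoryless_pi s a s' : Defs.pi M [:: (s, a)] s' = Defs.pi M h1 s'.
Proof. by case: (M_memoryless [:: (s, a)] h1 s'). Qed.

Lemma memoryless_pay s a s' : pay M [:: (s, a)] s' = pay M h1 s'.
Proof. by case: (M_memoryless [:: (s, a)] h1 s'). Qed.

Lemma pi_false (h : hist signaling_env) s : (size h < 2)%N ->
  Defs.pi M h s false = 1 - Defs.pi M h s true.
Proof. by move=> /(M_valid h s) [_]; rewrite big_bool /=; lra. Qed.

Lemma pi_ge0 (h : hist signaling_env) s a : (size h < 2)%N ->
  0 <= Defs.pi M h s a.
Proof. by move=> /(M_valid h s) [->]. Qed.

Lemma uP0_add_uA_memoryless :
  uP0 M + \sum_s P0 signaling_env s * uA_pat M [::] s =
  2^-1 * (Defs.pi M h1 true true - 2 * Defs.pi M h1 false true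
          - Defs.pi M [::] false true).
Proof.
rewrite /uP0 /uP /uA_pat /= !big_bool /= !memoryless_pi !memoryless_pay.
rewrite !(pi_false [::]) // !(pi_false h1) //.
lra.
Qed.

Lemma IC_myopic_monotone : IC_myopic M ->
  Defs.pi M h1 true true <= Defs.pi M h1 false true.
Proof.
pose r : strategy signaling_env := fun h s => if h is [::] then s else ~~ s.
have r_truthful h s : (size h < size h1)%N -> r h s = s by case: h.
move=> IC; have := IC h1 true r erefl r_truthful.
have := IC h1 false r erefl r_truthful.
rewrite /uAr_myo /uA_myo /= !big_bool /= !(pi_false h1) //.
lra.
Qed.

Lemma IC_patient_monotone : IC_patient M ->
  Defs.pi M h1 true true <= Defs.pi M h1 false true.
Proof.
pose r s0 : strategy signaling_env :=
  fun h s => if h is [::] then s else if s == s0 then ~~ s else s.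
move=> IC; have := IC (r true); have := IC (r false).
rewrite /uA_pat /uAr_pat /rep /= !big_bool /= !memoryless_pi !memoryless_pay.
rewrite !(pi_false [::]) // !(pi_false h1) //.
lra.
Qed.

Lemma memoryless_uP0_le0 myopic : feasible myopic M -> uP0 M <= 0.
Proof.
case=> _ IC_IR.
have [monotone IR] : Defs.pi M h1 true true <= Defs.pi M h1 false true /\
                     IR_patient M.
  case: myopic IC_IR => -[IC IR]; split.
  - exact: IC_myopic_monotone.
  - exact: IR_myopic_patient signaling_env_valid M_valid IR.
  - exact: IC_patient_monotone.
  - exact: IR.
have := uP0_add_uA_memoryless; move: IR; rewrite /IR_patient.
have := pi_ge0 h1 false true isT; have := pi_ge0 [::] false true isT.
lra.
Qed.

End Memoryless.
End Example.

Theorem theorem4 (R : realType) (myopic : bool) (eps : R) :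
  0 < eps ->
  exists E : env R, valid_env E /\
    (exists M : mech E, feasible myopic M /\ 0 < uP0 M) /\
    (forall M : mech E, feasible myopic M -> memoryless M ->
       forall c : R, eps * c < uP0 M ->
         exists M' : mech E, feasible myopic M' /\ c < uP0 M').
Proof.
move=> eps_gt0; exists (signaling_env R); split; first exact: signaling_env_valid.
have repeat_mech_gt0 : 0 < uP0 (repeat_mech R) by rewrite uP0_repeat_mech invr_gt0.
split; first by exists (repeat_mech R); split; first exact: repeat_mech_feasible.
move=> M M_feasible M_memoryless c c_lt.
exists (repeat_mech R); split; first exact: repeat_mech_feasible.
have c_lt0 : c < 0.
  rewrite -(pmulr_rlt0 c eps_gt0); apply: lt_le_trans c_lt _.
  exact: memoryless_uP0_le0 M_feasible.1 M_memoryless _ M_feasible.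
exact: lt_trans c_lt0 repeat_mech_gt0.
Qed.
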